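(* Let $A=\{0,1,2\}$ and let $T\colon A^4\to A$ be given by $T(1,1,2,2)=T(1,2,1,2)=1$ and $T(\mathbf{x})=0$ for all other $\mathbf{x}\in A^4$. Then \[\langle\{T\}\rangle^{(2)}=\{e^2_1,e^2_2,c^2_0,\delta_{(1,2)},\delta_{(2,1)}\},\] where $e^2_1(x,y)=x$, $e^2_2(x,y)=y$, $c^2_0$ is the binary constant zero function, and for $\mathbf{a}\in A^2$, $\delta_{\mathbf{a}}(\mathbf{x})=1$ if $\mathbf{x}=\mathbf{a}$ and $\delta_{\mathbf{a}}(\mathbf{x})=0$ otherwise.
   Context: $\langle\{T\}\rangle$ denotes the clone generated by $T$ (all term operations of positive arity of $(A;T)$, including projections), and $\langle\{T\}\rangle^{(2)}$ its binary members. *)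

From mathcomp Require Import all_boot.
Set Implicit Arguments. Unset Strict Implicit. Unset Printing Implicit Defensive.

Definition A := 'I_3.

Definition T (x1 x2 x3 x4 : A) : nat :=
  if ((x1 == 1 :> nat) && (x2 == 1 :> nat) && (x3 == 2 :> nat) && (x4 == 2 :> nat))
     || ((x1 == 1 :> nat) && (x2 == 2 :> nat) && (x3 == 1 :> nat) && (x4 == 2 :> nat))
  then 1 else 0.

Lemma T_lt3 x1 x2 x3 x4 : T x1 x2 x3 x4 < 3.
Proof. by rewrite /T; case: ifP. Qed.

Definition TA (x1 x2 x3 x4 : A) : A := Ordinal (T_lt3 x1 x2 x3 x4).

Inductive term2 : Type :=
| VarX : term2
| VarY : term2
| AppT : term2 -> term2 -> term2 -> term2 -> term2.

Fixpoint eval2 (t : term2) (x y : A) : A :=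
  match t with
  | VarX => x
  | VarY => y
  | AppT t1 t2 t3 t4 => TA (eval2 t1 x y) (eval2 t2 x y) (eval2 t3 x y) (eval2 t4 x y)
  end.

(* f belongs to <{T}>^(2): f is a binary term operation of (A; T). *)
Definition in_clone2 (f : A -> A -> A) : Prop :=
  exists t : term2, forall x y, eval2 t x y = f x y.

Definition e21 (x y : A) : nat := x.
Definition e22 (x y : A) : nat := y.
Definition c20 (x y : A) : nat := 0.
Definition delta (a b : nat) (x y : A) : nat :=
  if (x == a :> nat) && (y == b :> nat) then 1 else 0.

From mathcomp Require Import all_boot.

(* The five listed operations contain both projections and are closed under
   T (a finite check), so by induction on terms every binary term operation
   is one of them; conversely each of them is a term of depth at most one:
   x, y, T(x,x,x,x), T(x,x,y,y) and T(y,y,x,x). *)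

Section TermOperationsInFamily.

Variables (I : Type) (F : I -> A -> A -> A).

Hypothesis F_projX : exists i, F i =2 fun x _ => x.
Hypothesis F_projY : exists i, F i =2 fun _ y => y.
Hypothesis F_closed : forall i1 i2 i3 i4, exists i,
  forall x y, TA (F i1 x y) (F i2 x y) (F i3 x y) (F i4 x y) = F i x y.

Lemma eval2_in_family (t : term2) : exists i, eval2 t =2 F i.
Proof.
elim: t => [||t1 [i1 e1] t2 [i2 e2] t3 [i3 e3] t4 [i4 e4]].
- by have [i ei] := F_projX; exists i => x y; rewrite ei.
- by have [i ei] := F_projY; exists i => x y; rewrite ei.
have [i ei] := F_closed i1 i2 i3 i4.
by exists i => x y /=; rewrite e1 e2 e3 e4 ei.
Qed.

End TermOperationsInFamily.

(* T read on values: [val (TA x1 x2 x3 x4)] is convertible to [Tnat x1 x2 x3 x4].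
   Closure is checked by computing on nat, since [vm_compute] cannot enumerate
   ordinals ([insub] is stuck on the opaque [idP]). *)
Definition Tnat (a b c d : nat) : nat :=
  if ((a == 1) && (b == 1) && (c == 2) && (d == 2))
     || ((a == 1) && (b == 2) && (c == 1) && (d == 2)) then 1 else 0.

(* Indices 0..4 stand for e21, e22, c20, delta 1 2 and delta 2 1; every index
   above 4 also denotes delta 2 1. *)
Definition listed_op (k x y : nat) : nat :=
  match k with
  | 0 => x
  | 1 => y
  | 2 => 0
  | 3 => if (x == 1) && (y == 2) then 1 else 0
  | _ => if (x == 2) && (y == 1) then 1 else 0
  end.

Lemma listed_op_lt3 k (x y : A) : listed_op k x y < 3.
Proof. by case: k => [|[|[|[|k]]]] /=; rewrite ?ltn_ord //; case: ifP. Qed.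

Definition listed_opA (k : 'I_5) (x y : A) : A := Ordinal (listed_op_lt3 k x y).

Definition eq_on3 (f g : nat -> nat -> nat) : bool :=
  all (fun x => all (fun y => f x y == g x y) (iota 0 3)) (iota 0 3).

Lemma eq_on3P f g : eq_on3 f g -> forall x y : A, f x y = g x y.
Proof.
have mem3 (x : A) : val x \in iota 0 3 by rewrite mem_iota ltn_ord.
by move=> /allP fg x y; apply/eqP/(allP (fg _ (mem3 x)))/mem3.
Qed.

Lemma listed_op_closedb :
  all (fun k1 => all (fun k2 => all (fun k3 => all (fun k4 =>
    has (fun k => eq_on3 (fun x y => Tnat (listed_op k1 x y) (listed_op k2 x y)
                                          (listed_op k3 x y) (listed_op k4 x y))
                         (listed_op k))
      (iota 0 5)) (iota 0 5)) (iota 0 5)) (iota 0 5)) (iota 0 5).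
Proof. by vm_compute. Qed.

Lemma listed_opA_closed (k1 k2 k3 k4 : 'I_5) : exists k, forall x y,
  TA (listed_opA k1 x y) (listed_opA k2 x y) (listed_opA k3 x y) (listed_opA k4 x y)
  = listed_opA k x y.
Proof.
have mem5 (k : 'I_5) : val k \in iota 0 5 by rewrite mem_iota ltn_ord.
have /allP/(_ _ (mem5 k1))/allP/(_ _ (mem5 k2))/allP/(_ _ (mem5 k3))
  /allP/(_ _ (mem5 k4))/hasP[k] := listed_op_closedb.
rewrite mem_iota /= => lt_k5 /eq_on3P eq_k.
by exists (Ordinal lt_k5) => x y; apply: val_inj; exact: eq_k.
Qed.

Definition listed_op_term (k : 'I_5) : term2 :=
  match val k with
  | 0 => VarX
  | 1 => VarY
  | 2 => AppT VarX VarX VarX VarX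
  | 3 => AppT VarX VarX VarY VarY
  | _ => AppT VarY VarY VarX VarX
  end.

Lemma eval2_listed_op_term k x y : eval2 (listed_op_term k) x y = listed_opA k x y.
Proof.
apply: val_inj; case: k => [[|[|[|[|[|k]]]]] //= _].
all: by case: x => [[|[|[|x]]] ?] //; case: y => [[|[|[|y]]] ?].
Qed.

Lemma in_clone2_listed_op (f : A -> A -> A) :
  in_clone2 f <-> exists k, f =2 listed_opA k.
Proof.
split=> [[t ft] | [k fk]]; last first.
  by exists (listed_op_term k) => x y; rewrite fk eval2_listed_op_term.
have [||k tk] := @eval2_in_family _ listed_opA _ _ listed_opA_closed t.
- by exists (@Ordinal 5 0 isT) => x y; apply: val_inj.
- by exists (@Ordinal 5 1 isT) => x y; apply: val_inj.
by exists k => x y; rewrite -ft tk.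
Qed.

Theorem lemma3p8 (f : A -> A -> A) :
  in_clone2 f <->
  ((forall x y, f x y = e21 x y :> nat) \/
   (forall x y, f x y = e22 x y :> nat) \/
   (forall x y, f x y = c20 x y :> nat) \/
   (forall x y, f x y = delta 1 2 x y :> nat) \/
   (forall x y, f x y = delta 2 1 x y :> nat)).
Proof.
apply: iff_trans (in_clone2_listed_op f) _; split=> [[[k lt_k5]] | ].
  by move: lt_k5; case: k => [|[|[|[|[|k]]]]] //= lt_k5 fk;
    do ?[by left => x y; rewrite fk | right]; move=> x y; rewrite fk.
by case=> [fk|[fk|[fk|[fk|fk]]]];
  [exists (@Ordinal 5 0 isT) | exists (@Ordinal 5 1 isT) | exists (@Ordinal 5 2 isT)
  | exists (@Ordinal 5 3 isT) | exists (@Ordinal 5 4 isT)] => x y; apply: val_inj; apply: fk.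
Qed.
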